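(* For the system $$(u_{0,0}-u_{1,1})(v_{1,0}-v_{0,1})-\alpha+\beta=0,\qquad (v_{0,0}-v_{1,1})(u_{1,0}-u_{0,1})-\alpha+\beta=0,$$ the pair $$(\rho,\sigma)=\big(\ln|(u_{1,0}-u_{-1,0})(v_{1,0}-v_{-1,0})|,\ \ \ln|(u_{0,1}-u_{-1,0})(v_{0,1}-v_{-1,0})|\big)$$ is a conservation law, i.e. $(\mathcal T-1)\rho=(\mathcal S-1)\sigma$ on solutions.
   Context: Unknowns $u,v$ on $\mathbb Z^2$, $u_{i,j}=u(n+i,m+j)$, similarly $v$; $\alpha\neq\beta$ constants. Shifts $\mathcal S:n\mapsto n+1$, $\mathcal T:m\mapsto m+1$, acting by $\mathcal S^k\mathcal T^\ell(f_{i,j})=f_{i+k,j+\ell}$. A conservation law is a pair $(\rho,\sigma)$ of functions of finitely many shifts of $(u,v)$ with $(\mathcal T-1)\rho=(\mathcal S-1)\sigma$ holding for all solutions of the system (on which all arguments of logarithms are nonzero). *)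

From Stdlib Require Import Reals ZArith.
Open Scope R_scope.

Definition sh (f : Z -> Z -> R) (n m : Z) (i j : Z) : R := f (n + i)%Z (m + j)%Z.

Definition system (alpha beta : R) (u v : Z -> Z -> R) (n m : Z) : Prop :=
  (sh u n m 0 0 - sh u n m 1 1) * (sh v n m 1 0 - sh v n m 0 1) - alpha + beta = 0 /\
  (sh v n m 0 0 - sh v n m 1 1) * (sh u n m 1 0 - sh u n m 0 1) - alpha + beta = 0.

Definition rho_arg (u v : Z -> Z -> R) (n m : Z) : R :=
  (sh u n m 1 0 - sh u n m (-1) 0) * (sh v n m 1 0 - sh v n m (-1) 0).
Definition sigma_arg (u v : Z -> Z -> R) (n m : Z) : R :=
  (sh u n m 0 1 - sh u n m (-1) 0) * (sh v n m 0 1 - sh v n m (-1) 0).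

Definition cl_rho (u v : Z -> Z -> R) (n m : Z) : R := ln (Rabs (rho_arg u v n m)).
Definition cl_sigma (u v : Z -> Z -> R) (n m : Z) : R := ln (Rabs (sigma_arg u v n m)).

(* Write g := alpha - beta.  Each equation of the system solves one corner of a
   plaquette, e.g. u_{1,1} = u_{0,0} - g / (v_{1,0} - v_{0,1}); combining the
   equations at (n,m) and (n-1,m) yields
     (u_{1,1} - u_{-1,1}) (v_{1,0} - v_{0,1}) (v_{-1,0} - v_{0,1}) = g (v_{1,0} - v_{-1,0})
   and its analogue with u and v exchanged.  Multiplying the two gives the
   multiplicative conservation law
     rho_arg(n,m+1) * sigma_arg(n,m) = sigma_arg(n+1,m) * rho_arg(n,m),
   and taking ln |.| turns it into the additive one. *)
From Stdlib Require Import Reals ZArith Lra Lia.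
Open Scope R_scope.

Lemma cross_difference (g a b c p q r : R) :
  (a - b) * (p - q) = g ->
  (r - q) * (a - c) = g ->
  (b - c) * (p - q) * (r - q) = g * (p - r).
Proof.
  intros Hb Hc.
  replace ((b - c) * (p - q) * (r - q))
    with ((r - q) * (a - c) * (p - q) - (a - b) * (p - q) * (r - q)) by ring.
  rewrite Hb, Hc; ring.
Qed.

Lemma quad_cross_identity
    (g u00 u11 u10 u01 um0 um1 v00 v11 v10 v01 vm0 vm1 : R) :
  g <> 0 ->
  (u00 - u11) * (v10 - v01) = g ->
  (v00 - v11) * (u10 - u01) = g ->
  (um0 - u01) * (v00 - vm1) = g ->
  (vm0 - v01) * (u00 - um1) = g ->
  ((u11 - um1) * (v11 - vm1)) * ((u01 - um0) * (v01 - vm0)) =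
  ((u11 - u00) * (v11 - v00)) * ((u10 - um0) * (v10 - vm0)).
Proof.
  intros Hg H1 H2 H3 H4.
  assert (Hv : v10 - v01 <> 0) by (intro E; rewrite E, Rmult_0_r in H1; auto).
  assert (Hu : u10 - u01 <> 0) by (intro E; rewrite E, Rmult_0_r in H2; auto).
  pose proof (cross_difference g u00 u11 um1 v10 v01 vm0 H1 H4) as Ku.
  pose proof (cross_difference g v00 v11 vm1 u10 u01 um0 H2 H3) as Kv.
  apply (Rmult_eq_reg_r ((v10 - v01) * (u10 - u01)));
    [|now apply Rmult_integral_contrapositive].
  transitivity (((u11 - um1) * (v10 - v01) * (vm0 - v01))
                * ((v11 - vm1) * (u10 - u01) * (um0 - u01))); [ring|].
  rewrite Ku, Kv.
  transitivity ((u00 - u11) * (v10 - v01) * ((v00 - v11) * (u10 - u01))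
                * ((u10 - um0) * (v10 - vm0))); [|ring].
  rewrite H1, H2; ring.
Qed.

Lemma ln_Rabs_sub_eq (a b c d : R) :
  a <> 0 -> b <> 0 -> c <> 0 -> d <> 0 -> a * d = c * b ->
  ln (Rabs a) - ln (Rabs b) = ln (Rabs c) - ln (Rabs d).
Proof.
  intros Ha Hb Hc Hd E.
  enough (ln (Rabs a) + ln (Rabs d) = ln (Rabs c) + ln (Rabs b)) by lra.
  rewrite <- !ln_mult by (apply Rabs_pos_lt; assumption).
  now rewrite <- !Rabs_mult, E.
Qed.

Lemma rho_sigma_cross (alpha beta : R) (u v : Z -> Z -> R) (n m : Z) :
  alpha <> beta ->
  system alpha beta u v n m ->
  system alpha beta u v (n + -1) m ->
  rho_arg u v n (m + 1) * sigma_arg u v n m =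
  sigma_arg u v (n + 1) m * rho_arg u v n m.
Proof.
  intros Hab [H1 H2] [H3 H4].
  unfold rho_arg, sigma_arg, sh in *.
  rewrite ?Z.add_0_r in *.
  replace (n + 1 + -1)%Z with n in * by lia.
  replace (n + -1 + 1)%Z with n in * by lia.
  apply (quad_cross_identity (alpha - beta)); lra.
Qed.

Theorem mainTheorem5 (alpha beta : R) (u v : Z -> Z -> R) :
  alpha <> beta ->
  (forall n m : Z, system alpha beta u v n m) ->
  (forall n m : Z, rho_arg u v n m <> 0 /\ sigma_arg u v n m <> 0) ->
  forall n m : Z,
    cl_rho u v n (m + 1)%Z - cl_rho u v n m = cl_sigma u v (n + 1)%Z m - cl_sigma u v n m.
Proof.
  intros Hab Hsys Hnz n m.
  apply ln_Rabs_sub_eq; try apply Hnz.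
  now apply (rho_sigma_cross alpha beta).
Qed.
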